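(* Fix an integer precision $p\ge 1$ and let $\epsilon = 2^{-p+1}$. Suppose GDS is $k$-competitive in the following sense: for every request sequence $\tau$ in which every pair has a positive integer cost-to-size ratio, and for every way of breaking ties among pairs of smallest $H$-value, $\mathrm{GDS}(\tau)\le k\cdot \mathrm{OPT}(\tau)$. Then for every request sequence $\sigma$ in which every pair has a positive integer cost-to-size ratio, $\mathrm{CAMP}(\sigma) \le (1+\epsilon)\,k\cdot \mathrm{OPT}(\sigma)$.
   Context: Caching model: a memory of fixed capacity; each key-value pair $q$ has size $\operatorname{size}(q)>0$ and cost $\operatorname{cost}(q)>0$, each pair fits in memory by itself. Requests arrive in sequence; if the requested pair is not in memory (a miss), its cost is paid and it is brought into memory, evicting other pairs as needed so the total size of pairs in memory never exceeds capacity. For an algorithm $A$ and sequence $\sigma$, $A(\sigma)$ is the total cost paid on misses; $\mathrm{OPT}(\sigma)$ is the minimum total cost over all (offline) eviction strategies that know $\sigma$ in advance. GDS: keeps a global $L$ (initially $0$) and $H(q)$ for pairs $q$ in memory. On a request for $q$: if $q$ is in memory, $L\leftarrow\min_{r\in M\setminus\{q\}}H(r)$; otherwise, while there is not enough room for $q$, evict a pair with smallest $H$ and set $L\leftarrow \min_{r\in M}H(r)$, then bring $q$ in; finally $H(q)\leftarrow L+\operatorname{cost}(q)/\operatorname{size}(q)$. Rounding to precision $p$: for a positive integer $x$ whose highest nonzero bit is in position $b$ (positions numbered from $1$ at the lowest-order bit), $\bar x = x$ if $b\le p$, and otherwise $\bar x$ is $x$ with its $b-p$ lowest-order bits set to zero.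 CAMP with precision $p$: on sequence $\sigma$, it makes exactly the eviction decisions GDS makes (with ties among smallest $H$ broken by least-recent request) when each pair's cost-to-size ratio $x=\operatorname{cost}(q)/\operatorname{size}(q)$ is replaced by its rounded value $\bar x$; but on each miss for $q$ it pays the true cost $\operatorname{cost}(q)$. Equivalently, letting $\bar\sigma$ be $\sigma$ with each pair's cost replaced by $\operatorname{size}(q)\cdot\bar x$, CAMP's decisions on $\sigma$ coincide with those of GDS on $\bar\sigma$. *)

From mathcomp Require Import all_boot all_order all_algebra.
From mathcomp Require Import classical_sets reals.
Set Implicit Arguments. Unset Strict Implicit. Unset Printing Implicit Defensive.
Import Order.TTheory GRing.Theory Num.Theory.
Local Open Scope ring_scope.

Section Caching.
Variables (R : realType) (T : eqType).

Variables (sz cost : T -> R) (C : R).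

(** total size of the pairs in memory (memory is a duplicate-free list) *)
Definition total (M : seq T) : R := \sum_(r <- M) sz r.

(** [opt_run M tau c] : starting with memory [M], some (offline) strategy
    serves [tau] paying total cost [c]. *)
Inductive opt_run : seq T -> seq T -> R -> Prop :=
| opt_nil M : opt_run M [::] 0
| opt_hit M q tau c : q \in M -> opt_run M tau c -> opt_run M (q :: tau) c
| opt_miss M M' q tau c : q \notin M ->
    q \in M' -> uniq M' -> {subset M' <= q :: M} -> total M' <= C ->
    opt_run M' tau c -> opt_run M (q :: tau) (cost q + c).

Definition OPT (tau : seq T) : R := inf [set c | opt_run [::] tau c].

Definition minH (H : T -> R) (s : seq T) : option R :=
  foldr (fun r acc => if acc is Some m then Some (Num.min (H r) m) else Some (H r))
        None s.

Record gds_state := GState { gM : seq T; gH : T -> R; gL : R }.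

Definition gds_init : gds_state := GState [::] (fun _ => 0) 0.

(** eviction loop on a miss for [q]: while there is not enough room, evict
    a pair with smallest H (any such pair: every tie-breaking is allowed)
    and set L to the minimum H over the memory (= H of the evicted pair). *)
Inductive gds_evict (H : T -> R) (q : T) : seq T -> R -> seq T -> R -> Prop :=
| gev_done M L : total M + sz q <= C -> gds_evict H q M L M L
| gev_step M L v M' L' : C < total M + sz q ->
    v \in M -> (forall r, r \in M -> H v <= H r) ->
    gds_evict H q (rem v M) (H v) M' L' -> gds_evict H q M L M' L'.

Inductive gds_step : gds_state -> T -> gds_state -> R -> Prop :=
| gstep_hit M H L q : q \in M ->
    let L' := odflt L (minH H (filter (predC1 q) M)) in
    gds_step (GState M H L) q
      (GState M (fun r => if r == q then L' + cost q / sz q else H r) L') 0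
| gstep_miss M H L q M' L' : q \notin M -> gds_evict H q M L M' L' ->
    gds_step (GState M H L) q
      (GState (q :: M') (fun r => if r == q then L' + cost q / sz q else H r) L')
      (cost q).

Inductive gds_run : gds_state -> seq T -> R -> Prop :=
| grun_nil st : gds_run st [::] 0
| grun_cons st q tau st' a c : gds_step st q st' a -> gds_run st' tau c ->
    gds_run st (q :: tau) (a + c).

End Caching.

(** highest nonzero bit position of x > 0 (positions from 1) *)
Definition hibit (x : nat) : nat := (trunc_log 2 x).+1.

Definition round_prec (p x : nat) : nat :=
  let b := hibit x in
  if (b <= p)%N then x else (x %/ 2 ^ (b - p) * 2 ^ (b - p))%N.

Definition int_cost (R : realType) (T : eqType) (sz : T -> R) (x : T -> nat) (q : T) : R :=
  sz q * (x q)%:R.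

Section CAMP.
Variables (R : realType) (T : eqType).
Variables (sz cost cbar : T -> R) (C : R).
(* [cbar] : rounded costs used for decisions; [cost] : true costs paid *)

Record camp_state := CState { cM : seq T; cH : T -> R; cL : R; clr : T -> nat }.

Definition camp_victim (H : T -> R) (lr : T -> nat) (M : seq T) : option T :=
  foldr (fun r acc => match acc with
                      | None => Some r
                      | Some v => if (H r < H v) || ((H r == H v) && (lr r < lr v)%N)
                                  then Some r else Some v end) None M.

Fixpoint camp_evict (fuel : nat) (H : T -> R) (lr : T -> nat) (q : T)
    (M : seq T) (L : R) : seq T * R :=
  if fuel is fuel'.+1 then
    if total sz M + sz q <= C then (M, L) else
    match camp_victim H lr M with
    | None => (M, L)
    | Some v => camp_evict fuel' H lr q (rem v M) (H v)
    end
  else (M, L).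

Fixpoint camp_go (st : camp_state) (t : nat) (tau : seq T) : R :=
  match tau with
  | [::] => 0
  | q :: tau' =>
    let: CState M H L lr := st in
    let lr' := fun r => if r == q then t else lr r in
    if q \in M then
      let L' := odflt L (minH H (filter (predC1 q) M)) in
      camp_go (CState M (fun r => if r == q then L' + cbar q / sz q else H r) L' lr')
              t.+1 tau'
    else
      let: (M', L') := camp_evict (size M) H lr q M L in
      cost q + camp_go (CState (q :: M')
                         (fun r => if r == q then L' + cbar q / sz q else H r) L' lr')
                       t.+1 tau'
  end.

End CAMP.

Definition CAMP (R : realType) (T : eqType) (p : nat) (sz : T -> R) (x : T -> nat)
    (C : R) (sigma : seq T) : R :=
  camp_go sz (int_cost sz x) (int_cost sz (fun q => round_prec p (x q))) C
          (CState [::] (fun _ => 0) 0 (fun _ => 0%N)) 1 sigma.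

Definition eps (R : realType) (p : nat) : R := (2%:R ^+ p.-1)^-1.

From Pilot Require Import Defs.
From mathcomp Require Import all_boot all_order all_algebra.
From mathcomp Require Import classical_sets reals.
From mathcomp Require Import zify.
Set Implicit Arguments. Unset Strict Implicit. Unset Printing Implicit Defensive.
Import Order.TTheory GRing.Theory Num.Theory.
Local Open Scope ring_scope.

(* CAMP takes exactly the decisions of GDS on the rounded instance [sigma_bar],
   and pays at most (1 + eps) times what GDS pays there: rounding to precision
   p only clears bits below the p-th highest one, so x <= (1 + eps) x_bar.
   Hence CAMP(sigma) <= (1 + eps) GDS(sigma_bar) <= (1 + eps) k OPT(sigma_bar)
   <= (1 + eps) k OPT(sigma), since OPT is monotone in the costs. *)

Lemma round_prec_le p x : (round_prec p x <= x)%N.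
Proof. by rewrite /round_prec; case: ifP => // _; apply: leq_divM. Qed.

Lemma round_prec_error p x : (0 < p)%N -> (0 < x)%N ->
  (x * 2 ^ p.-1 <= round_prec p x * (2 ^ p.-1).+1)%N.
Proof.
move=> p_gt0 x_gt0; rewrite /round_prec /hibit.
set t := trunc_log 2 x; set d := (t.+1 - p)%N.
have tx : (2 ^ t <= x)%N by apply: trunc_logP.
case: ifP => [_|/negbT]; first by rewrite mulnS leq_addl.
rewrite -ltnNge => p_lt.
have eq_t : (2 ^ t = 2 ^ p.-1 * 2 ^ d)%N by rewrite -expnD; congr expn; lia.
have d_gt0 : (0 < 2 ^ d)%N by rewrite expn_gt0.
set r := (x %/ 2 ^ d * 2 ^ d)%N.
(* [2 ^ d] divides [2 ^ t <= x], so rounding down keeps [r] above [2 ^ t]. *)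
have tr : (2 ^ t <= r)%N by rewrite /r eq_t leq_mul2r leq_divRL // -eq_t tx orbT.
have xr : (x < r + 2 ^ d)%N by rewrite {1}(divn_eq x (2 ^ d)) ltn_add2l ltn_pmod.
rewrite mulnS; move: tr xr; rewrite eq_t => tr xr; nia.
Qed.

Lemma round_prec_gt0 p x : (0 < p)%N -> (0 < x)%N -> (0 < round_prec p x)%N.
Proof.
move=> p_gt0 x_gt0; have := round_prec_error p_gt0 x_gt0.
by rewrite lt0n; apply: contraTneq => ->; rewrite -ltnNge muln_gt0 x_gt0 expn_gt0.
Qed.

Lemma round_prec_rel_error (R : realType) p x : (0 < p)%N -> (0 < x)%N ->
  (x%:R : R) <= (1 + eps R p) * (round_prec p x)%:R.
Proof.
move=> p_gt0 x_gt0; have := round_prec_error p_gt0 x_gt0.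
rewrite mulnS -(ler_nat R) natrD !natrM natrX /eps.
set A := (2%:R ^+ p.-1 : R); have A_gt0 : 0 < A by rewrite exprn_gt0.
move=> h; rewrite -(ler_pM2r A_gt0) (le_trans h) //.
by rewrite mulrDl mul1r mulrDl mulrAC mulVf ?gt_eqF // mul1r addrC.
Qed.

Section CampIsGds.
Variables (R : realType) (T : eqType) (sz : T -> R) (C : R).

Lemma camp_victim_min (H : T -> R) lr (M : seq T) : M != [::] ->
  exists v, [/\ camp_victim H lr M = Some v, v \in M & forall r, r \in M -> H v <= H r].
Proof.
elim: M => [//|a M IH] _; have [->|/IH [v [vE vM v_min]]] := eqVneq M [::].
  by exists a; rewrite mem_seq1; split=> // r; rewrite mem_seq1 => /eqP->.
rewrite /= -/(camp_victim H lr M) vE; case: ifP => [a_v|/negbT].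
  exists a; split; rewrite ?mem_head // => r; rewrite inE => /predU1P[-> //|rM].
  by apply: le_trans (v_min _ rM); case/orP: a_v => [/ltW|/andP[/eqP->]].
rewrite negb_or => /andP[a_v _]; exists v; split; rewrite ?inE ?vM ?orbT //.
by move=> r /predU1P[->|/v_min //]; rewrite leNgt.
Qed.

Lemma camp_evict_gds n H lr q M L : (size M <= n)%N -> sz q <= C ->
  gds_evict sz C H q M L (camp_evict sz C n H lr q M L).1 (camp_evict sz C n H lr q M L).2.
Proof.
move=> + szq; elim: n M L => [|n IH] M L /=.
  by rewrite leqn0 => /nilP->; apply: gev_done; rewrite /Defs.total big_nil add0r.
move=> sizeM; case: ifP => [fits|/negbT]; first exact: gev_done.
rewrite -ltNge => overflow.
have /(camp_victim_min H lr)[v [-> vM v_min]] : M != [::].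
  by apply: contraTneq overflow => ->; rewrite /Defs.total big_nil add0r -leNgt.
apply: (gev_step _ overflow vM v_min); apply: IH.
by rewrite size_rem //; case: M sizeM {overflow v_min} vM.
Qed.

Lemma camp_go_gds_run (cbar : T -> R) tau : all (fun q => sz q <= C) tau ->
  forall M H L lr t,
  gds_run sz cbar C (GState M H L) tau (camp_go sz cbar cbar C (CState M H L lr) t tau).
Proof.
elim: tau => [|q tau IH] /=; first by move=> *; apply: grun_nil.
move=> /andP[szq /IH {}IH] M H L lr t; have [qM|qM] := boolP (q \in M).
  rewrite -[camp_go _ _ _ _ _ _ _]add0r.
  exact: grun_cons (gstep_hit _ _ _ _ _ qM) (IH _ _ _ _ _).
have := camp_evict_gds H lr L (leqnn (size M)) szq.
case: camp_evict => M' L' /= evict.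
exact: grun_cons (gstep_miss _ qM evict) (IH _ _ _ _ _).
Qed.

Lemma camp_go_cost_le (cost cost' cbar : T -> R) a tau :
  all (fun q => cost q <= a * cost' q) tau -> forall st t,
  camp_go sz cost cbar C st t tau <= a * camp_go sz cost' cbar C st t tau.
Proof.
elim: tau => [|q tau IH] /=; first by move=> *; rewrite mulr0.
move=> /andP[cost_le /IH {}IH] [M H L lr] t /=; case: ifP => _; first exact: IH.
by case: camp_evict => M' L'; rewrite mulrDr lerD.
Qed.

End CampIsGds.

Section GdsCost.
Variables (R : realType) (T : eqType) (sz cost : T -> R) (C : R).

Lemma gds_run_ge0 st tau c : gds_run sz cost C st tau c ->
  all (fun q => 0 <= cost q) tau -> 0 <= c.
Proof.
elim=> {st tau c} // st q tau st' a c step _ IH /= /andP[cost_q /IH c_ge0].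
by apply: addr_ge0 c_ge0; case: step cost_q.
Qed.

Lemma gds_run_miss_gt0 st q tau c : gds_run sz cost C st (q :: tau) c ->
  q \notin gM st -> 0 < cost q -> all (fun r => 0 <= cost r) tau -> 0 < c.
Proof.
move E: (q :: tau) => s run; case: run E => // st0 q0 tau0 st' a c' step run [-> ->].
move=> q_miss cost_q /(gds_run_ge0 run) c'_ge0.
case: step q_miss cost_q => [M H L q1 q1M|M H L q1 M' L' _ _ _ cost_q].
  by rewrite /= q1M.
exact: ltr_pwDl.
Qed.

End GdsCost.

Section OptCost.
Variables (R : realType) (T : eqType) (sz : T -> R) (C : R).

Lemma opt_run_ge0 (cost : T -> R) M tau c : opt_run sz cost C M tau c ->
  all (fun q => 0 <= cost q) tau -> 0 <= c.
Proof.
elim=> {M tau c} // [M q tau c _ _ IH /andP[_ /IH //]|].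
by move=> M M' q tau c _ _ _ _ _ _ IH /andP[cost_q /IH]; apply: addr_ge0.
Qed.

Lemma opt_run_exists (cost : T -> R) M tau : all (fun q => sz q <= C) tau ->
  exists c, opt_run sz cost C M tau c.
Proof.
elim: tau M => [|q tau IH] M /=; first by exists 0; apply: opt_nil.
move=> /andP[szq /IH run]; have [qM|qM] := boolP (q \in M).
  by have [c ?] := run M; exists c; apply: opt_hit.
(* on a miss, evicting the whole memory is always possible *)
have [c run_q] := run [:: q]; exists (cost q + c).
apply: (opt_miss qM _ _ _ _ run_q); rewrite ?mem_head //.
- by move=> r; rewrite mem_seq1 => /eqP->; apply: mem_head.
- by rewrite /Defs.total big_seq1.
Qed.

Lemma opt_run_recost (c1 c2 : T -> R) M tau c : opt_run sz c1 C M tau c ->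
  all (fun q => c2 q <= c1 q) tau -> exists2 c', opt_run sz c2 C M tau c' & c' <= c.
Proof.
elim=> {M tau c} [M|M q tau c qM _ IH|M M' q tau c qM qM' uM' sub fits _ IH] /=.
- by exists 0 => //; apply: opt_nil.
- by move=> /andP[_ /IH[c' run le_c]]; exists c' => //; apply: opt_hit.
move=> /andP[le_q /IH[c' run le_c]]; exists (c2 q + c'); last exact: lerD.
exact: opt_miss qM qM' uM' sub fits run.
Qed.

Lemma OPT_ge0 (cost : T -> R) tau : all (fun q => sz q <= C) tau ->
  all (fun q => 0 <= cost q) tau -> 0 <= OPT sz cost C tau.
Proof.
move=> fits cost_ge0; apply: lb_le_inf; first exact: opt_run_exists.
by move=> c run; apply: opt_run_ge0 run cost_ge0.
Qed.

Lemma OPT_le (c1 c2 : T -> R) tau : all (fun q => sz q <= C) tau ->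
  all (fun q => 0 <= c2 q) tau -> all (fun q => c2 q <= c1 q) tau ->
  OPT sz c2 C tau <= OPT sz c1 C tau.
Proof.
move=> fits c2_ge0 c2_le; apply: lb_le_inf; first exact: opt_run_exists.
move=> c /opt_run_recost /(_ c2_le)[c' run' le_c]; apply: le_trans le_c.
by apply: ge_inf run'; exists 0 => y /opt_run_ge0; apply.
Qed.

Lemma gds_bound_recost (c1 c2 : T -> R) k tau c :
  all (fun q => sz q <= C) tau -> all (fun q => 0 < c2 q) tau ->
  all (fun q => c2 q <= c1 q) tau ->
  gds_run sz c2 C (gds_init R T) tau c -> c <= k * OPT sz c2 C tau ->
  c <= k * OPT sz c1 C tau.
Proof.
move=> fits c2_gt0 c2_le run c_le; have c2_ge0 := sub_all (fun q => @ltW _ _ 0 (c2 q)) c2_gt0.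
have opt_le := OPT_le fits c2_ge0 c2_le.
have [k_ge0|k_lt0] := leP 0 k; first exact: le_trans c_le (ler_wpM2l k_ge0 opt_le).
case: tau => [|q tau] /= in fits c2_gt0 c2_ge0 c2_le run c_le opt_le *.
  (* on the empty sequence OPT does not depend on the costs *)
  by have <- : OPT sz c2 C [::] = OPT sz c1 C [::] by apply/le_anti; rewrite opt_le OPT_le.
(* a nonempty sequence starts with a miss, so a negative ratio [k] is impossible *)
case/andP: c2_gt0 => c2q_gt0 _; case/andP: (c2_ge0) => _ c2tau_ge0.
have := lt_le_trans (gds_run_miss_gt0 run isT c2q_gt0 c2tau_ge0) c_le.
by rewrite ltNge mulr_le0_ge0 ?OPT_ge0 // ltW.
Qed.

End OptCost.

Lemma CAMP_le_rounded_gds (R : realType) (T : eqType) p (sz : T -> R) x C sigma :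
  (0 < p)%N -> (forall q, q \in sigma -> [/\ 0 < sz q, sz q <= C & (0 < x q)%N]) ->
  exists2 c, gds_run sz (int_cost sz (fun q => round_prec p (x q))) C (gds_init R T) sigma c
           & CAMP p sz x C sigma <= (1 + eps R p) * c.
Proof.
move=> p_gt0 hs; have fits : all (fun q => sz q <= C) sigma by apply/allP => q /hs[].
set cbar := int_cost sz _.
exists (camp_go sz cbar cbar C (CState [::] (fun _ => 0) 0 (fun _ => 0%N)) 1 sigma).
  exact: camp_go_gds_run.
apply: camp_go_cost_le; apply/allP => q /hs[sz_gt0 _ x_gt0].
by rewrite /int_cost mulrCA ler_pM2l // round_prec_rel_error.
Qed.

Theorem mainTheorem3 (R : realType) (T : eqType) (C : R) (p : nat) (k : R)
  (hp : (1 <= p)%N)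
  (HGDS : forall (sz' : T -> R) (x' : T -> nat) (tau : seq T),
      (forall q, q \in tau -> [/\ 0 < sz' q, sz' q <= C & (0 < x' q)%N]) ->
      forall c, gds_run sz' (int_cost sz' x') C (gds_init R T) tau c ->
        c <= k * OPT sz' (int_cost sz' x') C tau)
  (sz : T -> R) (x : T -> nat) (sigma : seq T) :
  (forall q, q \in sigma -> [/\ 0 < sz q, sz q <= C & (0 < x q)%N]) ->
  CAMP p sz x C sigma <= (1 + eps R p) * k * OPT sz (int_cost sz x) C sigma.
Proof.
move=> hs; set xb := fun q => round_prec p (x q).
have hs_rounded q : q \in sigma -> [/\ 0 < sz q, sz q <= C & (0 < xb q)%N].
  by case/hs=> sz_gt0 szC x_gt0; split=> //; apply: round_prec_gt0.
have [c gds_c camp_le] := CAMP_le_rounded_gds hp hs.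
rewrite -mulrA; apply: (le_trans camp_le); rewrite ler_wpM2l ?addr_ge0 ?invr_ge0 ?exprn_ge0 //.
apply: (gds_bound_recost _ _ _ gds_c (HGDS _ _ _ hs_rounded _ gds_c)).
- by apply/allP => q /hs[].
- by apply/allP => q /hs_rounded[sz_gt0 _ xb_gt0]; rewrite mulr_gt0 ?ltr0n.
- by apply/allP => q /hs[sz_gt0 _ _]; rewrite ler_pM2l // ler_nat round_prec_le.
Qed.
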